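(* Let $D$ be a compact state space, let $A,B\subset D$ be disjoint nonempty closed sets with $A\cup B\subsetneq D$, and let $f:D\times D\to[0,\infty)$ satisfy the conditions listed in the context. Let $z^*$ be the $A$-$B$ competency of $f$, and assume that $L_{z^*}$ is $A$-$B$ connected. Then for every $z\in(0,z^*]$, every integer $n\ge N(z)$ and every $0\le i\le n$, \[ W^{n,i}_z=\pi_i\big(\mathbb{G}_n(L_z)\big). \] That is: (1) for every $\alpha\in W^{n,i}_z$ there exists a transition path $\vec\omega=(\omega_0,\dots,\omega_n)\in\mathbb{G}_n(L_z)$ with $\omega_i=\alpha$; and (2) for every $\vec\omega=(\omega_0,\dots,\omega_n)\in\mathbb{G}_n(L_z)$ one has $\omega_j\in W^{n,j}_z$ for all $0\le j\le n$.
   Context: Conditions on $f$: (i) $f(x,y)\ge 0$ for all $(x,y)\in D\times D$, and $f(x,y)=0$ whenever $x\in B$ (and $y\in D$) or whenever $y\in A$ (and $x\in D$); (ii) $f(x,x)=0$ for all $x\in D$; (iii) for every $x\in D\setminus(A\cup B)$, $\int_D f(x,y)\,dy=\int_D f(y,x)\,dy$; (iv) $f$ is bounded and piecewise continuous on $D\times D$. An $A$-$B$ transition path of length $n\in\mathbb{N}$ is a tuple $\vec\omega=(\omega_0,\omega_1,\dots,\omega_n)\in D^{n+1}$ with $\omega_0\in A$, $\omega_n\in B$ and $f(\omega_k,\omega_{k+1})>0$ for $0\le k\le n-1$; its edges are the pairs $(\omega_k,\omega_{k+1})$. For a set $\mathcal C\subset D\times D$, $\mathbb{G}_n(\mathcal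 C)$ denotes the set of all $A$-$B$ transition paths of length $n$ all of whose edges lie in $\mathcal C$, and $\mathcal C$ is called $A$-$B$ connected if $\bigcup_n\mathbb{G}_n(\mathcal C)\neq\emptyset$. For $z\ge0$ let $L_z=\{(x,y)\in D\times D: f(x,y)\ge z\}$. The $A$-$B$ competency of $f$ is $z^*=\sup\{z\ge0: L_z \text{ is } A\text{-}B\text{ connected}\}$. For $z>0$ and $C\subset D$ define $\Phi_z(C)=\bigcup_{x\in C}\{y\in D:(x,y)\in L_z\}$, $\Phi_z^0(C)=C$, $\Phi_z^m(C)=\Phi_z(\Phi_z^{m-1}(C))$. Let $N(z)=\min\{n\ge1:\Phi_z^n(A)\cap B\neq\emptyset\}$. For $n\ge N(z)$ define $W^{n,n}_z=\Phi^n_z(A)\cap B$ and recursively, for $0\le i<n$, $W^{n,i}_z=\{x\in\Phi^i_z(A):\Phi_z(\{x\})\cap W^{n,i+1}_z\neq\emptyset\}$. For $\vec\omega=(\omega_0,\dots,\omega_n)$, $\pi_i(\vec\omega)=\omega_i$ is the canonical projection. *)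

From HB Require Import structures.
From mathcomp Require Import all_boot all_order all_algebra.
From mathcomp Require Import all_classical all_reals all_analysis.
Unset Printing Implicit Defensive.
Import Order.TTheory GRing.Theory Num.Theory.
Local Open Scope classical_set_scope.
Local Open Scope ring_scope.

Section TPT.
Context {R : realType} {X : ptopologicalType}.
Variables (D A B : set X) (f : X -> X -> R).

Definition tp_edge (n : nat) (w : 'I_n.+1 -> X) (k : 'I_n) : X * X :=
  (w (widen_ord (leqnSn n) k), w (lift ord0 k)).

Definition transition_path (n : nat) (w : 'I_n.+1 -> X) : Prop :=
  (forall k, D (w k)) /\ A (w ord0) /\ B (w ord_max) /\
  (forall k : 'I_n, 0 < f (tp_edge n w k).1 (tp_edge n w k).2).

Definition Gpaths (n : nat) (C : set (X * X)) : set ('I_n.+1 -> X) :=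
  [set w | transition_path n w /\ forall k : 'I_n, C (tp_edge n w k)].

Definition AB_connected (C : set (X * X)) : Prop :=
  exists n, Gpaths n C !=set0.

Definition Lset (z : R) : set (X * X) :=
  [set p | D p.1 /\ D p.2 /\ z <= f p.1 p.2].

Definition competency : R :=
  sup [set z : R | 0 <= z /\ AB_connected (Lset z)].

Definition Phi (z : R) (C : set X) : set X :=
  [set y | D y /\ exists2 x, C x & Lset z (x, y)].

Definition Phin (z : R) (m : nat) (C : set X) : set X := iter m (Phi z) C.

Definition is_Nz (z : R) (N : nat) : Prop :=
  (1 <= N)%N /\ (Phin z N A `&` B !=set0) /\
  (forall m, (1 <= m)%N -> Phin z m A `&` B !=set0 -> (N <= m)%N).

(* Wrec z n k = W^{n, n-k}_z *)
Fixpoint Wrec (z : R) (n k : nat) : set X :=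
  match k with
  | 0 => Phin z n A `&` B
  | k'.+1 => [set x | Phin z (n - k) A x /\ Phi z [set x] `&` Wrec z n k' !=set0]
  end.

Definition W (z : R) (n i : nat) : set X := Wrec z n (n - i).

Definition bounded_on_DxD : Prop :=
  exists M : R, forall x y, D x -> D y -> `|f x y| <= M.

Definition piecewise_continuous_on_DxD : Prop :=
  exists (k : nat) (P : 'I_k -> set (X * X)),
    (forall j, (<<s @open (X * X)%type >>) (P j)) /\
    (D `*` D `<=` \bigcup_j P j) /\
    (forall j, {within P j, continuous (fun p : X * X => (f p.1 p.2 : R^o))}).
End TPT.

(* Both sides describe the same chains.  Unfolding Phi_z, a point of
   Phi_z^i(A) is the endpoint of an L_z-chain of length i starting in A, and
   unfolding the backward recursion, a point of W^{n,i}_z is moreover the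
   start of an L_z-chain of length n - i ending in B; gluing the two chains
   gives a transition path of length n through the point at position i.
   Conversely, the prefix and the suffix of a path in G_n(L_z) at position j
   witness membership in W^{n,j}_z.  Edges of L_z have weight at least
   z > 0, so such chains are transition paths; of the hypotheses only
   z > 0 and A `<=` D are needed. *)
From HB Require Import structures.
From mathcomp Require Import all_boot all_order all_algebra.
From mathcomp Require Import all_classical all_reals all_analysis.
Import Order.TTheory GRing.Theory Num.Theory.
Local Open Scope classical_set_scope.
Local Open Scope ring_scope.

Section Chains.
Context {R : realType} {X : ptopologicalType}.
Variables (D A B : set X) (f : X -> X -> R) (z : R).

Definition Lchain (m : nat) (p : nat -> X) : Prop :=
  forall k, (k < m)%N -> Lset D f z (p k, p k.+1).

Lemma Lchain_cat i k (g h : nat -> X) : g i = h 0%N ->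
  Lchain i g -> Lchain k h ->
  Lchain (i + k) (fun j => if (j <= i)%N then g j else h (j - i)%N).
Proof.
move=> gh Lg Lh j jik /=; have [ji|ij] := ltnP j i.
  by rewrite (ltnW ji); apply: Lg.
rewrite subSn //; case: leqP => [ji|_]; last by apply: Lh; rewrite ltn_subLR.
have j_eq_i : j = i by apply/eqP; rewrite eqn_leq ji ij.
by subst j; rewrite subnn gh; apply: Lh; rewrite -(ltn_add2l i) addn0.
Qed.

Lemma Phin_chain i x : Phin D f z i A x ->
  exists2 g : nat -> X, A (g 0%N) /\ g i = x & Lchain i g.
Proof.
elim: i x => [|i IH] x /=; first by move=> Ax; exists (fun=> x).
case=> _ [y /IH [g [Ag gi] Lg] Lyx].
exists (fun k => if (k <= i)%N then g k else x) => [|k]; first by rewrite ltnn.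
rewrite ltnS => ki; rewrite ki; have [->|kNi] := eqVneq k i.
  by rewrite ltnn gi.
by rewrite ltn_neqAle kNi ki; apply: Lg; rewrite ltn_neqAle kNi.
Qed.

Lemma chain_Phin i (g : nat -> X) : A (g 0%N) -> Lchain i g ->
  Phin D f z i A (g i).
Proof.
move=> Ag; elim: i => [|i IH] Lg //=.
have [_ [Dgi _]] := Lg i (ltnSn i).
split=> //; exists (g i); last exact: Lg.
by apply: IH => k ki; apply: Lg; apply: ltnW.
Qed.

Lemma Wrec_chain n k x : Wrec D A B f z n k x ->
  Phin D f z (n - k) A x /\
  exists2 h : nat -> X, h 0%N = x /\ B (h k) & Lchain k h.
Proof.
elim: k x => [|k IH] x /=.
  by case=> Px Bx; rewrite subn0; split=> //; exists (fun=> x).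
case=> Px [y [[_ [_ -> Lxy]] /IH [_ [h [h0 Bh] Lh]]]]; split=> //.
exists (fun j => if j is j'.+1 then h j' else x) => // [[_|j]] /=.
  by rewrite h0.
by rewrite ltnS; apply: Lh.
Qed.

Lemma chain_Wrec n (p : nat -> X) : A (p 0%N) -> B (p n) -> Lchain n p ->
  forall k j, (j + k = n)%N -> Wrec D A B f z n k (p j).
Proof.
move=> Ap Bp Lp; elim=> [|k IH] j /=.
  by rewrite addn0 => jn; subst n; split=> //; apply: chain_Phin.
move=> jkn; have jn : (j < n)%N by rewrite -jkn addnS ltnS leq_addr.
have -> : (n - k.+1 = j)%N by rewrite -jkn addnK.
split; first by apply: chain_Phin => // m mj; apply: Lp; apply: ltn_trans jn.
have Lpj := Lp j jn; have [_ [Dpj _]] := Lpj.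
exists (p j.+1); split; first by split=> //; exists (p j).
by apply: IH; rewrite addSnnS.
Qed.

Lemma Lchain_Gpaths n (p : nat -> X) : 0 < z -> A `<=` D ->
  A (p 0%N) -> B (p n) -> Lchain n p ->
  Gpaths D A B f n (Lset D f z) (fun k : 'I_n.+1 => p k).
Proof.
move=> z_gt0 AD Ap Bp Lp.
have Ledge (k : 'I_n) : Lset D f z (tp_edge n (fun k : 'I_n.+1 => p k) k).
  by rewrite /tp_edge /= /bump leq0n add1n; apply: Lp.
split=> //; split; last first.
  do 2!split=> //; move=> k; have [_ [_ zf]] := Ledge k.
  exact: lt_le_trans zf.
case=> [[|k]] kn /=; first exact: AD.
by have [_ []] := Lp k kn.
Qed.

Lemma Gpaths_Lchain n (w : 'I_n.+1 -> X) :
  Gpaths D A B f n (Lset D f z) w ->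
  [/\ A (w (inord 0)), B (w (inord n)) & Lchain n (fun j => w (inord j))].
Proof.
case=> [[_ [Aw [Bw _]]] Lw]; split.
- by rewrite (_ : inord 0 = ord0) //; apply: val_inj; rewrite /= inordK.
- by rewrite (_ : inord n = ord_max) //; apply: val_inj; rewrite /= inordK.
move=> k kn; have := Lw (Ordinal kn); rewrite /tp_edge.
congr (Lset D f z (w _, w _)); apply: val_inj; rewrite /= ?lift0 inordK //.
exact: ltnW.
Qed.

End Chains.

Theorem mainTheorem1 (R : realType) (X : ptopologicalType)
  (mu : {measure set (g_sigma_algebraType (@open X)) -> \bar R})
  (D A B : set X) (f : X -> X -> R) :
  compact D ->
  closed A -> closed B -> A !=set0 -> B !=set0 -> A `&` B = set0 ->
  A `<=` D -> B `<=` D -> (exists2 x, D x & ~ (A `|` B) x) ->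
  (* (i) *)
  (forall x y, D x -> D y -> 0 <= f x y) ->
  (forall x y, B x -> D y -> f x y = 0) ->
  (forall x y, D x -> A y -> f x y = 0) ->
  (* (ii) *)
  (forall x, D x -> f x x = 0) ->
  (* (iii) *)
  (forall x, (D `\` (A `|` B)) x ->
     (\int[mu]_(y in (D : set (g_sigma_algebraType (@open X)))) (f x y)%:E
      = \int[mu]_(y in (D : set (g_sigma_algebraType (@open X)))) (f y x)%:E)%E) ->
  (* (iv) *)
  bounded_on_DxD D f -> piecewise_continuous_on_DxD D f ->
  AB_connected D A B f (Lset D f (competency D A B f)) ->
  forall (z : R), 0 < z -> z <= competency D A B f ->
  forall (Nz : nat), is_Nz D A B f z Nz ->
  forall (n : nat), (Nz <= n)%N ->
  forall (i : 'I_n.+1),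
    W D A B f z n i = (fun w : 'I_n.+1 -> X => w i) @` Gpaths D A B f n (Lset D f z).
Proof.
move=> _ _ _ _ _ _ AD _ _ _ _ _ _ _ _ _ _ z z_gt0 _ _ _ n _ i.
have i_le_n : (i <= n)%N by rewrite -ltnS.
apply/seteqP; split=> x /=.
- move=> /Wrec_chain[]; rewrite subKn // => /Phin_chain[g [Ag gi] Lg].
  move=> [h [h0 Bh] Lh].
  pose p j := if (j <= i)%N then g j else h (j - i)%N.
  have Lp : Lchain D f z (i + (n - i)) p.
    by apply: Lchain_cat Lg Lh; rewrite gi h0.
  rewrite subnKC // in Lp.
  have pn : p n = h (n - i)%N.
    rewrite /p; case: leqP => // n_le_i.
    have i_eq_n : (i : nat) = n by apply/eqP; rewrite eqn_leq i_le_n.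
    by rewrite i_eq_n subnn h0 -gi i_eq_n.
  exists (fun k : 'I_n.+1 => p k); last by rewrite /p leqnn.
  by apply: Lchain_Gpaths => //; rewrite pn.
- case=> w /Gpaths_Lchain[A0 Bn Lw] <-.
  have -> : w i = w (inord i) by rewrite inord_val.
  by apply: chain_Wrec A0 Bn Lw _ _ _; rewrite subnKC.
Qed.
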